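(* Let $\mathcal{G}_R$ be the class of all finite reflexive graphs and let $G\in\mathcal{G}_R$ be a reflexive graph not isomorphic to $N_{n,k}$ for any natural numbers $n,k$ with $2k\le n$. Then the class $\mathrm{Av}(G)=\{H\in\mathcal{G}_R: G\not\preceq H\}$, with respect to the strong homomorphic image ordering $\preceq$, is not well quasi-ordered.
   Context: A reflexive graph is a set with a symmetric edge relation having a loop at every vertex. A homomorphism maps edges to edges; it is strong if additionally every edge of the target between vertices of the image is the image of an edge. Strong homomorphic image ordering: $A\preceq B$ iff there is a surjective strong homomorphism $B\to A$. For $2k\le n$, $N_{n,k}$ is the reflexive graph on $\{1,\dots,n\}$ with all pairs of distinct vertices adjacent except $\{1,2\},\{3,4\},\dots,\{2k-1,2k\}$. Well quasi-ordered means no infinite strictly decreasing sequence and no infinite antichain; graphs considered up to isomorphism. *)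

From mathcomp Require Import all_boot.
Set Implicit Arguments. Unset Strict Implicit. Unset Printing Implicit Defensive.

Record rgr := RGraph {
  rg_n : nat;
  rg_e : rel 'I_rg_n;
  rg_sym : symmetric rg_e;
  rg_refl : reflexive rg_e }.

Definition vert (G : rgr) := 'I_(rg_n G).

Definition is_hom (B A : rgr) (f : vert B -> vert A) : Prop :=
  forall x y, rg_e x y -> rg_e (f x) (f y).

Definition is_strong_hom (B A : rgr) (f : vert B -> vert A) : Prop :=
  is_hom f /\
  forall x y : vert B, rg_e (f x) (f y) ->
    exists x' y' : vert B, [/\ f x' = f x, f y' = f y & rg_e x' y'].

Definition surj (B A : rgr) (f : vert B -> vert A) : Prop :=
  forall u : vert A, exists x, f x = u.

Definition sh_le (A B : rgr) : Prop :=
  exists f : vert B -> vert A, surj f /\ is_strong_hom f.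

Definition rg_iso (A B : rgr) : Prop :=
  exists f : vert A -> vert B, bijective f /\
    forall x y, rg_e (f x) (f y) = rg_e x y.

(* N_{n,k} on vertices 0..n-1 (vertex i corresponds to i+1): the non-edges are
   {2t,2t+1} for t < k. *)
Definition Nnk_e (n k : nat) : rel 'I_n :=
  fun i j => (i == j) || ~~ ((i./2 == j./2) && (i./2 < k)).

Arguments Nnk_e : clear implicits.

Lemma Nnk_sym n k : symmetric (Nnk_e n k).
Proof. move=> i j; rewrite /Nnk_e eq_sym [j./2 == _]eq_sym. by case: (i./2 =P j./2) => [->|]. Qed.

Lemma Nnk_refl n k : reflexive (Nnk_e n k).
Proof. by move=> i; rewrite /Nnk_e eqxx. Qed.

Arguments Nnk_sym : clear implicits.
Arguments Nnk_refl : clear implicits.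
Definition Nnk (n k : nat) : rgr := @RGraph n (Nnk_e n k) (Nnk_sym n k) (Nnk_refl n k).

Definition Av (G : rgr) (H : rgr) : Prop := ~ sh_le G H.

Definition wqo_on (P : rgr -> Prop) (le : rgr -> rgr -> Prop) : Prop :=
  (~ exists s : nat -> rgr, (forall i, P (s i)) /\
       forall i, le (s i.+1) (s i) /\ ~ le (s i) (s i.+1)) /\
  (~ exists s : nat -> rgr, (forall i, P (s i)) /\
       forall i j, i <> j -> ~ le (s i) (s j)).

From mathcomp Require Import all_boot zify.

Set Implicit Arguments. Unset Strict Implicit. Unset Printing Implicit Defensive.

(* The antichain is N_{2i,i}, i in nat.  Non-edges lift along homomorphisms, so
   in a homomorphic image of some N_{n,k} every vertex still has at most one
   non-neighbour; pairing each vertex with that non-neighbour shows that such a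
   graph is isomorphic to some N_{n,k}, hence G is not an image of any N_{2i,i}.
   Conversely, a surjective homomorphism N_{2j,j} -> N_{2i,i} is injective:
   every vertex u of the target has a non-neighbour, and a preimage of it is the
   unique non-neighbour of every preimage of u.  So i = j by counting. *)

Definition nonadj_unique (G : rgr) : Prop :=
  forall x y z : vert G, ~~ rg_e x y -> ~~ rg_e x z -> y = z.

Lemma nonadj_unique_hom_image (B A : rgr) (f : vert B -> vert A) :
  surj f -> is_hom f -> nonadj_unique B -> nonadj_unique A.
Proof.
move=> fsurj fhom uniqB x y z.
have [a <-] := fsurj x; have [b <-] := fsurj y; have [c <-] := fsurj z.
by move=> /(contra (fhom a b)) nab /(contra (fhom a c)) nac; rewrite (uniqB a b c).
Qed.

Lemma hom_injective (B A : rgr) (f : vert B -> vert A) :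
  surj f -> is_hom f -> nonadj_unique B ->
  (forall u : vert A, exists v, ~~ rg_e u v) -> injective f.
Proof.
move=> fsurj fhom uniqB nonadjA x1 x2 fx12.
have [v nuv] := nonadjA (f x1); have [y fy] := fsurj v.
have nonadj_y x : f x = f x1 -> ~~ rg_e y x.
  by move=> fx; rewrite rg_sym; apply: contra nuv => /fhom; rewrite fx fy.
exact: uniqB (nonadj_y x1 erefl) (nonadj_y x2 (esym fx12)).
Qed.

Lemma surj_inj_card (B A : rgr) (f : vert B -> vert A) :
  surj f -> injective f -> rg_n B = rg_n A.
Proof.
move=> fsurj finj; rewrite -[rg_n B]card_ord -(card_codom finj) -[RHS]card_ord.
by apply: eq_card => u; have [x <-] := fsurj u; rewrite codom_f.
Qed.

Lemma eq_half_uniq a b c : a./2 = b./2 -> a./2 = c./2 -> a != b -> a != c -> b = c.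
Proof.
move=> hb hc /eqP nab /eqP nac.
move: (odd_double_half a) (odd_double_half b) (odd_double_half c); rewrite -hb -hc.
by case: (odd a); case: (odd b); case: (odd c) => /=; lia.
Qed.

Lemma Nnk_nonadj_unique n k : nonadj_unique (Nnk n k).
Proof.
move=> a b c; rewrite /= /Nnk_e !negb_or !negbK.
move=> /and3P[nab /eqP hb _] /and3P[nac /eqP hc _].
exact/val_inj/(eq_half_uniq hb hc).
Qed.

Lemma Nnk_double_nonadj a (u : vert (Nnk a.*2 a)) : exists v, ~~ rg_e u v.
Proof.
have ltu : u < a.*2 := ltn_ord u.
have ltv : ~~ odd u + (u./2).*2 < a.*2.
  by move: (odd_double_half u) ltu; case: (odd u) => /=; lia.
exists (Ordinal ltv); rewrite /= /Nnk_e /= negb_or negbK half_bit_double eqxx.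
rewrite ltn_half_double ltu -val_eqE /= !andbT.
by apply/eqP => /(congr1 odd); rewrite oddD odd_double addbF; case: (odd u).
Qed.

Lemma index_enum_lt (T : finType) (A : {set T}) x :
  x \in A -> index x (enum A) < #|A|.
Proof. by rewrite cardE index_mem mem_enum. Qed.

Section NonadjUniqueIso.

Variable G : rgr.
Hypothesis uniqG : nonadj_unique G.
Local Notation V := 'I_(rg_n G).

(* [partner x = x] when [x] is adjacent to every vertex. *)
Definition partner (x : V) : V := odflt x [pick y | ~~ rg_e x y].

Lemma nonadjE (x y : V) : (~~ rg_e x y) = (partner x != x) && (y == partner x).
Proof.
rewrite /partner; case: pickP => [z nxz|adj_x] /=; last by rewrite eqxx adj_x.
have -> : z != x by apply: contraNneq nxz => ->; rewrite rg_refl.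
by apply/idP/eqP => [nxy|->//]; apply: uniqG nxy nxz.
Qed.

Lemma partnerK : involutive partner.
Proof.
move=> x; have [fix_x|nfix] := eqVneq (partner x) x; first by rewrite !fix_x.
have : ~~ rg_e (partner x) x by rewrite rg_sym nonadjE nfix eqxx.
by rewrite nonadjE => /andP[_ /eqP].
Qed.

Lemma partner_lt (x : V) : partner x != x -> (x < partner x) || (partner x < x).
Proof. by rewrite -val_eqE neq_ltn orbC. Qed.

Definition lower := [set x : V | x < partner x].
Definition fixed := [set x : V | partner x == x].
Definition nmatch := #|lower|.

Definition pair_min (x : V) : V := if x < partner x then x else partner x.

Lemma pair_min_lower (x : V) : partner x != x -> pair_min x \in lower.
Proof.
move=> /partner_lt; rewrite /pair_min inE; case: ifP => //= _ lt_px.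
by rewrite partnerK.
Qed.

Lemma pair_minP (x y : V) : pair_min x = pair_min y <-> y = x \/ y = partner x.
Proof.
split=> [|[->|->]] //; rewrite /pair_min.
- case: ifP; case: ifP => _ _ e.
  + by left.
  + by right; rewrite e partnerK.
  + by right.
  + by left; apply: (can_inj partnerK).
- by rewrite (partnerK x); case: (ltngtP x (partner x)) => // /val_inj /esym.
Qed.

Lemma card_lower_fixed : nmatch.*2 + #|fixed| = rg_n G.
Proof.
have compl_fixed : ~: fixed = lower :|: partner @: lower.
  apply/setP => x; rewrite !inE.
  apply/idP/orP => [/partner_lt/orP[lt_x|lt_px]|[lt_x|/imsetP[y]]].
  - by left.
  - by right; apply/imsetP; exists (partner x); rewrite ?inE partnerK.
  - by rewrite -val_eqE /= neq_ltn lt_x orbT.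
  - by rewrite inE => lt_y ->; rewrite partnerK -val_eqE /= neq_ltn lt_y.
have disj : lower :&: partner @: lower = set0.
  apply/setP => x; rewrite !inE; apply/negP => /andP[lt_x /imsetP[y]].
  by rewrite inE => lt_y def_x; rewrite def_x partnerK ltnNge ltnW in lt_x.
have := cardsC fixed; rewrite card_ord compl_fixed.
have := cardsUI lower (partner @: lower); rewrite disj cards0 addn0 => ->.
by rewrite card_imset; [rewrite /nmatch; lia | apply: can_inj partnerK].
Qed.

(* The pair of the t-th vertex [x] of [lower] occupies positions 2t (for [x])
   and 2t+1 (for [partner x]); the vertices without partner come after 2k. *)
Definition code (x : V) : nat :=
  if partner x == x then nmatch.*2 + index x (enum fixed)
  else (partner x < x) + (index (pair_min x) (enum lower)).*2.

Lemma index_pair_min_lt (x : V) :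
  partner x != x -> index (pair_min x) (enum lower) < nmatch.
Proof. by move=> /pair_min_lower; apply: index_enum_lt. Qed.

Lemma code_lt (x : V) : code x < rg_n G.
Proof.
rewrite -card_lower_fixed /code; case: ifP => [fix_x|/negbT/index_pair_min_lt].
  by rewrite ltn_add2l index_enum_lt ?inE.
by case: (partner x < x) => /=; lia.
Qed.

Lemma code_half_fixed (x : V) : partner x == x -> nmatch <= (code x)./2.
Proof. by rewrite /code => ->; rewrite geq_half_double leq_addr. Qed.

Lemma code_half_matched (x : V) :
  partner x != x -> (code x)./2 = index (pair_min x) (enum lower).
Proof. by rewrite /code => /negbTE->; rewrite half_bit_double. Qed.

Lemma code_odd_matched (x : V) : partner x != x -> odd (code x) = (partner x < x).
Proof.
by rewrite /code => /negbTE->; rewrite oddD odd_double addbF; case: (_ < _).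
Qed.

Lemma code_half_lt (x : V) : ((code x)./2 < nmatch) = (partner x != x).
Proof.
have [fix_x|nfix] := eqVneq (partner x) x.
  by rewrite ltnNge code_half_fixed // fix_x.
by rewrite code_half_matched // index_pair_min_lt.
Qed.

Lemma code_half_eq (x y : V) : partner x != x -> partner y != y ->
  ((code x)./2 == (code y)./2) = (y == x) || (y == partner x).
Proof.
move=> nfix_x nfix_y; rewrite !code_half_matched //.
apply/eqP/orP => [/index_inj|hy].
  rewrite !mem_enum => /(_ x (pair_min_lower nfix_x) (pair_min_lower nfix_y)).
  by case/pair_minP => ->; [left | right].
by rewrite (pair_minP x y).2 //; case: hy => /eqP; auto.
Qed.

Lemma code_inj : injective code.
Proof.
move=> x y e; have ehalf : (code x)./2 = (code y)./2 by rewrite e.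
have [fix_x|nfix_x] := eqVneq (partner x) x.
  have fix_y : partner y == y.
    by rewrite -[_ == _]negbK -code_half_lt -ehalf code_half_lt fix_x eqxx.
  move: e; rewrite /code fix_x eqxx fix_y => /addnI eidx.
  by apply: (index_inj x) eidx; rewrite mem_enum inE ?fix_x.
have nfix_y : partner y != y by rewrite -code_half_lt -ehalf code_half_lt.
have /orP[/eqP //|/eqP y_px] : (y == x) || (y == partner x).
  by rewrite -code_half_eq // ehalf.
move: (congr1 odd e); rewrite !code_odd_matched // y_px partnerK.
by case: (ltngtP x (partner x)) nfix_x => // /val_inj <-; rewrite eqxx.
Qed.

Definition code_ord (x : V) : 'I_(rg_n G) := Ordinal (code_lt x).

Lemma Nnk_e_code (x y : V) :
  Nnk_e (rg_n G) nmatch (code_ord x) (code_ord y) = rg_e x y.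
Proof.
have [<-|nxy] := eqVneq x y; first by rewrite Nnk_refl rg_refl.
rewrite /Nnk_e -val_eqE /= (inj_eq code_inj) (negbTE nxy) /=.
rewrite -[rg_e x y]negbK nonadjE code_half_lt; congr (~~ _).
have [fix_x|nfix_x] /= := eqVneq (partner x) x; first by rewrite andbF.
rewrite andbT; have [fix_y|nfix_y] := eqVneq (partner y) y.
  have -> : (y == partner x) = false.
    by apply: contra_neqF nxy => /eqP y_px; rewrite -fix_y y_px partnerK.
  apply: contraTF (code_half_fixed (introT eqP fix_y)) => /eqP <-.
  by rewrite -ltnNge code_half_lt.
by rewrite code_half_eq // eq_sym (negbTE nxy).
Qed.

Lemma nonadj_unique_iso_Nnk :
  exists2 k, k.*2 <= rg_n G & rg_iso G (Nnk (rg_n G) k).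
Proof.
exists nmatch; first by rewrite -card_lower_fixed leq_addr.
exists code_ord; split; last exact: Nnk_e_code.
by apply: injF_bij => x y /(congr1 val) /code_inj.
Qed.

End NonadjUniqueIso.

Theorem theorem3p5 (G : rgr) :
  (forall n k : nat, 2 * k <= n -> ~ rg_iso G (Nnk n k)) ->
  ~ wqo_on (Av G) sh_le.
Proof.
move=> notNnk [_ no_antichain]; apply: no_antichain.
exists (fun i => Nnk i.*2 i); split.
  move=> i [f [fsurj [fhom _]]].
  have uniqG := nonadj_unique_hom_image fsurj fhom (@Nnk_nonadj_unique _ _).
  have [k le_kn isoG] := nonadj_unique_iso_Nnk uniqG.
  by apply: notNnk isoG; rewrite mul2n.
move=> i j neq_ij [f [fsurj [fhom _]]]; apply: neq_ij.
have finj :=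
  hom_injective fsurj fhom (@Nnk_nonadj_unique _ _) (@Nnk_double_nonadj i).
exact/double_inj/esym/(surj_inj_card fsurj finj).
Qed.
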